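(* Let $\mathcal{F}=(W,R)$ be a frame. Then: (1) $\mathcal{F}\models_{\mathsf{PWK}_e^{\Box}}\Box\varphi\to\varphi$ (for all formulas $\varphi$) iff $R$ is reflexive; (2) $\mathcal{F}\models_{\mathsf{PWK}_e^{\Box}}\Box\varphi\to\Box\Box\varphi$ iff $R$ is transitive; (3) $\mathcal{F}\models_{\mathsf{PWK}_e^{\Box}}\Diamond\varphi\to\Box\Diamond\varphi$ iff $R$ is Euclidean.
   Context: Formulas are built from a countably infinite set of propositional variables and the constants $0,1$ using the unary connectives $\neg$, $J_2$, $\Box$ and the binary connective $\vee$; $\varphi\to\psi:=\neg\varphi\vee\psi$ and $\Diamond\varphi:=\neg\Box\neg\varphi$. Let $\mathbf{WK}^e$ be the algebra on $\{0,\tfrac12,1\}$ with $\neg0=1$, $\neg1=0$, $\neg\tfrac12=\tfrac12$; $a\vee b=\tfrac12$ if $a=\tfrac12$ or $b=\tfrac12$, otherwise $a\vee b=\max(a,b)$; $J_2(1)=1$, $J_2(\tfrac12)=J_2(0)=0$. A frame is a pair $(W,R)$ with $W\neq\emptyset$ and $R\subseteq W\times W$. A PWK-Kripke model on $(W,R)$ is $(W,R,v)$ with $v:W\times\mathrm{Fm}\to\{0,\tfrac12,1\}$ such that each $v(w,\cdot)$ commutes with $\neg,\vee,J_2,0,1$ as computed in $\mathbf{WK}^e$, and: $v(w,\Box\varphi)=\tfrac12$ iff $v(w,\varphi)=\tfrac12$; $v(w,\Box\varphi)=1$ iff $v(w,\varphi)\neq\tfrac12$ and $v(s,\varphi)\neq0$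 for all $s$ with $wRs$; $v(w,\Box\varphi)=0$ iff $v(w,\varphi)\neq\tfrac12$ and $v(s,\varphi)=0$ for some $s$ with $wRs$. $\mathcal{F}\models_{\mathsf{PWK}_e^{\Box}}\varphi$ means: for every PWK-Kripke model $(W,R,v)$ on $\mathcal{F}$ and every $w\in W$, $v(w,\varphi)\neq0$. $R$ is Euclidean if $wRs$ and $wRt$ imply $sRt$. *)

(** Three truth values of WK^e: V0 = 0, Vh = 1/2, V1 = 1. *)
Inductive val : Type := V0 | Vh | V1.

Inductive Fm : Type :=
| Var : nat -> Fm
| Zero : Fm
| One : Fm
| Neg : Fm -> Fm
| J2 : Fm -> Fm
| Box : Fm -> Fm
| Or : Fm -> Fm -> Fm.

Definition Imp (p q : Fm) : Fm := Or (Neg p) q.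
Definition Dia (p : Fm) : Fm := Neg (Box (Neg p)).

Definition wk_neg (a : val) : val :=
  match a with V0 => V1 | Vh => Vh | V1 => V0 end.

Definition wk_or (a b : val) : val :=
  match a, b with
  | Vh, _ => Vh
  | _, Vh => Vh
  | V1, _ => V1
  | _, V1 => V1
  | V0, V0 => V0
  end.

Definition wk_J2 (a : val) : val :=
  match a with V1 => V1 | _ => V0 end.

Definition PWK_model {W : Type} (R : W -> W -> Prop) (v : W -> Fm -> val) : Prop :=
  forall w : W,
    v w Zero = V0 /\ v w One = V1 /\
    (forall p, v w (Neg p) = wk_neg (v w p)) /\
    (forall p, v w (J2 p) = wk_J2 (v w p)) /\
    (forall p q, v w (Or p q) = wk_or (v w p) (v w q)) /\
    (forall p,
       (v w (Box p) = Vh <-> v w p = Vh) /\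
       (v w (Box p) = V1 <-> (v w p <> Vh /\ forall s, R w s -> v s p <> V0)) /\
       (v w (Box p) = V0 <-> (v w p <> Vh /\ exists s, R w s /\ v s p = V0))).

Definition frame_valid {W : Type} (R : W -> W -> Prop) (phi : Fm) : Prop :=
  forall v : W -> Fm -> val, PWK_model R v -> forall w : W, v w phi <> V0.

Definition reflexive {W : Type} (R : W -> W -> Prop) : Prop := forall w, R w w.
Definition transitive {W : Type} (R : W -> W -> Prop) : Prop :=
  forall w s t, R w s -> R s t -> R w t.
Definition euclidean {W : Type} (R : W -> W -> Prop) : Prop :=
  forall w s t, R w s -> R w t -> R s t.

(** A refutation of these implications at a world [w] only ever needs
    [Box] in its classical reading: value 1 when no successor refutes [p],
    value 0 when some successor does.  The frame conditions therefore make
    the formulas valid.  Conversely, when a condition fails, one variable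
    that is true exactly on the right set of worlds (all but [w] for
    reflexivity, all but the offending [t] for transitivity, only [t] for
    Euclideanness) refutes the formula.  Such a two-valued assignment extends
    to a model, and since 1/2 can only propagate upwards from the atoms, no
    formula takes value 1/2 there. *)

From Pilot Require Import Defs.
(* Loaded for [setoid_rewrite] but not imported: its [reflexive] and
   [transitive] would shadow the frame properties of [Defs]. *)
From Stdlib Require Setoid.
From Stdlib Require Import Classical ClassicalEpsilon.

Section ModelSemantics.

Context {W : Type} {R : W -> W -> Prop} {v : W -> Fm -> val}.
Hypothesis Hv : PWK_model R v.

Lemma neg_val w p : v w (Neg p) = wk_neg (v w p).
Proof. apply (Hv w). Qed.

Lemma or_val w p q : v w (Or p q) = wk_or (v w p) (v w q).
Proof. apply (Hv w). Qed.

Lemma box_Vh w p : v w (Box p) = Vh <-> v w p = Vh.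
Proof. apply (Hv w). Qed.

Lemma box_V1 w p :
  v w (Box p) = V1 <-> v w p <> Vh /\ forall s, R w s -> v s p <> V0.
Proof. apply (Hv w). Qed.

Lemma box_V0 w p :
  v w (Box p) = V0 <-> v w p <> Vh /\ exists s, R w s /\ v s p = V0.
Proof. apply (Hv w). Qed.

Lemma neg_V1 w p : v w (Neg p) = V1 <-> v w p = V0.
Proof. rewrite neg_val; destruct (v w p); simpl; intuition discriminate. Qed.

Lemma neg_V0 w p : v w (Neg p) = V0 <-> v w p = V1.
Proof. rewrite neg_val; destruct (v w p); simpl; intuition discriminate. Qed.

Lemma neg_Vh w p : v w (Neg p) = Vh <-> v w p = Vh.
Proof. rewrite neg_val; destruct (v w p); simpl; intuition discriminate. Qed.

Lemma imp_V0 w p q : v w (Imp p q) = V0 <-> v w p = V1 /\ v w q = V0.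
Proof.
  unfold Imp; rewrite or_val, neg_val.
  destruct (v w p), (v w q); simpl; intuition discriminate.
Qed.

Lemma dia_V1 w p :
  v w (Dia p) = V1 <-> v w p <> Vh /\ exists s, R w s /\ v s p = V1.
Proof. unfold Dia; rewrite neg_V1, box_V0, neg_Vh; setoid_rewrite neg_V0; reflexivity. Qed.

Lemma dia_V0 w p :
  v w (Dia p) = V0 <-> v w p <> Vh /\ forall s, R w s -> v s p <> V1.
Proof. unfold Dia; rewrite neg_V0, box_V1, neg_Vh; setoid_rewrite neg_V0; reflexivity. Qed.

Lemma val_not_Vh :
  (forall w n, v w (Var n) <> Vh) -> forall p w, v w p <> Vh.
Proof.
  intros Hvar p; induction p as [n| | |p IH|p IH|p IH|p IHp q IHq]; intro w;
    destruct (Hv w) as (Hzero & Hone & _ & HJ2 & _).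
  - apply Hvar.
  - rewrite Hzero; discriminate.
  - rewrite Hone; discriminate.
  - rewrite neg_Vh; apply IH.
  - rewrite HJ2; destruct (v w p); discriminate.
  - rewrite box_Vh; apply IH.
  - rewrite or_val; specialize (IHp w); specialize (IHq w).
    destruct (v w p), (v w q); simpl; congruence.
Qed.

End ModelSemantics.

Section Soundness.

Context {W : Type} (R : W -> W -> Prop).

Lemma reflexive_valid_T phi :
  reflexive R -> frame_valid R (Imp (Box phi) phi).
Proof.
  intros Hrefl v Hv w Hw.
  apply (imp_V0 Hv) in Hw as [Hbox Hphi].
  apply (box_V1 Hv) in Hbox as [_ Hsucc].
  exact (Hsucc w (Hrefl w) Hphi).
Qed.

Lemma transitive_valid_4 phi :
  transitive R -> frame_valid R (Imp (Box phi) (Box (Box phi))).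
Proof.
  intros Htrans v Hv w Hw.
  apply (imp_V0 Hv) in Hw as [Hbox Hbox2].
  apply (box_V1 Hv) in Hbox as [_ Hsucc].
  apply (box_V0 Hv) in Hbox2 as [_ [s [Hws Hs]]].
  apply (box_V0 Hv) in Hs as [_ [t [Hst Ht]]].
  exact (Hsucc t (Htrans _ _ _ Hws Hst) Ht).
Qed.

Lemma euclidean_valid_5 phi :
  euclidean R -> frame_valid R (Imp (Dia phi) (Box (Dia phi))).
Proof.
  intros Heucl v Hv w Hw.
  apply (imp_V0 Hv) in Hw as [Hdia Hbox].
  apply (dia_V1 Hv) in Hdia as [_ [s [Hws Hs]]].
  apply (box_V0 Hv) in Hbox as [_ [t [Hwt Ht]]].
  apply (dia_V0 Hv) in Ht as [_ Hsucc].
  exact (Hsucc s (Heucl _ _ _ Hwt Hws) Hs).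
Qed.

End Soundness.

Section Countermodels.

Context {W : Type} (R : W -> W -> Prop).

Fixpoint eval (atoms : W -> nat -> val) (p : Fm) (w : W) : val :=
  match p with
  | Var n => atoms w n
  | Zero => V0
  | One => V1
  | Neg q => wk_neg (eval atoms q w)
  | J2 q => wk_J2 (eval atoms q w)
  | Or q r => wk_or (eval atoms q w) (eval atoms r w)
  | Box q =>
      match eval atoms q w with
      | Vh => Vh
      | _ => if excluded_middle_informative
                  (exists s, R w s /\ eval atoms q s = V0)
             then V0 else V1
      end
  end.

Lemma eval_model atoms : PWK_model R (fun w p => eval atoms p w).
Proof.
  intro w; do 5 (split; [reflexivity|]); intro p; cbn [eval].
  destruct (excluded_middle_informative (exists s, R w s /\ eval atoms p s = V0))
    as [Hex|Hnex];
    destruct (eval atoms p w); firstorder congruence.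
Qed.

Definition pred_model (P : W -> Prop) : W -> Fm -> val :=
  fun w p =>
    eval (fun s _ => if excluded_middle_informative (P s) then V1 else V0) p w.

Lemma pred_model_spec P : PWK_model R (pred_model P).
Proof. apply eval_model. Qed.

Lemma pred_model_true P w n : P w -> pred_model P w (Var n) = V1.
Proof. intro Hw; unfold pred_model; simpl; destruct excluded_middle_informative; tauto. Qed.

Lemma pred_model_false P w n : ~ P w -> pred_model P w (Var n) = V0.
Proof. intro Hw; unfold pred_model; simpl; destruct excluded_middle_informative; tauto. Qed.

Lemma pred_model_not_Vh P w p : pred_model P w p <> Vh.
Proof.
  apply (val_not_Vh (pred_model_spec P)); intros s n.
  unfold pred_model; simpl; destruct excluded_middle_informative; discriminate.
Qed.

Lemma valid_T_reflexive : frame_valid R (Imp (Box (Var 0)) (Var 0)) -> reflexive R.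
Proof.
  intros Hval w; apply NNPP; intro Hww.
  set (P := fun s => s <> w); pose proof (pred_model_spec P) as Hv.
  apply (Hval _ Hv w), (imp_V0 Hv); split.
  - apply (box_V1 Hv); split; [apply pred_model_not_Vh|].
    intros s Hs; rewrite pred_model_true; [discriminate|].
    intros ->; contradiction.
  - apply pred_model_false; unfold P; tauto.
Qed.

Lemma valid_4_transitive :
  frame_valid R (Imp (Box (Var 0)) (Box (Box (Var 0)))) -> transitive R.
Proof.
  intros Hval w s t Hws Hst; apply NNPP; intro Hwt.
  set (P := fun x => x <> t); pose proof (pred_model_spec P) as Hv.
  apply (Hval _ Hv w), (imp_V0 Hv); split.
  - apply (box_V1 Hv); split; [apply pred_model_not_Vh|].
    intros x Hx; rewrite pred_model_true; [discriminate|].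
    intros ->; contradiction.
  - apply (box_V0 Hv); split; [apply pred_model_not_Vh|].
    exists s; split; [exact Hws|].
    apply (box_V0 Hv); split; [apply pred_model_not_Vh|].
    exists t; split; [exact Hst|].
    apply pred_model_false; unfold P; tauto.
Qed.

Lemma valid_5_euclidean :
  frame_valid R (Imp (Dia (Var 0)) (Box (Dia (Var 0)))) -> euclidean R.
Proof.
  intros Hval w s t Hws Hwt; apply NNPP; intro Hst.
  set (P := fun x => x = t); pose proof (pred_model_spec P) as Hv.
  apply (Hval _ Hv w), (imp_V0 Hv); split.
  - apply (dia_V1 Hv); split; [apply pred_model_not_Vh|].
    exists t; split; [exact Hwt|].
    apply pred_model_true; reflexivity.
  - apply (box_V0 Hv); split; [apply pred_model_not_Vh|].
    exists s; split; [exact Hws|].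
    apply (dia_V0 Hv); split; [apply pred_model_not_Vh|].
    intros x Hx; rewrite pred_model_false; [discriminate|].
    intros ->; contradiction.
Qed.

End Countermodels.

Theorem mainTheorem15 (W : Type) (HW : inhabited W) (R : W -> W -> Prop) :
  ((forall phi : Fm, frame_valid R (Imp (Box phi) phi)) <-> reflexive R) /\
  ((forall phi : Fm, frame_valid R (Imp (Box phi) (Box (Box phi)))) <-> transitive R) /\
  ((forall phi : Fm, frame_valid R (Imp (Dia phi) (Box (Dia phi)))) <-> euclidean R).
Proof.
  split; [|split]; split.
  - intro Hval; exact (valid_T_reflexive R (Hval (Var 0))).
  - intros Hrefl phi; exact (reflexive_valid_T R phi Hrefl).
  - intro Hval; exact (valid_4_transitive R (Hval (Var 0))).
  - intros Htrans phi; exact (transitive_valid_4 R phi Htrans).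
  - intro Hval; exact (valid_5_euclidean R (Hval (Var 0))).
  - intros Heucl phi; exact (euclidean_valid_5 R phi Heucl).
Qed.
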